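(* For every alphabet size $\sigma \geq 2$ and every Parikh vector $P \in \mathbb{N}^{\sigma}$, and for every vertex $w$ of the configuration graph $G(P)$, there exists a Hamiltonian path in $G(P)$ starting at $w$.
   Context: Alphabet $\Sigma = [\sigma]$. For $P \in \mathbb{N}^\sigma$, $n := \sum_a P[a]$ and $\Sigma^{*|_P}$ is the set of words of length $n$ over $\Sigma$ in which each symbol $a$ occurs exactly $P[a]$ times. For a word $w$ and $i\neq j$ with $w[i]\neq w[j]$, the 2-swap $w\circ(i,j)$ exchanges the symbols at positions $i$ and $j$. The configuration graph $G(P)$ has vertex set $\Sigma^{*|_P}$ and an edge $\{w,u\}$ whenever $u = w\circ(i,j)$ for some 2-swap. A Hamiltonian path starting at $w$ is a path beginning at $w$ that visits every vertex exactly once. *)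

From mathcomp Require Import all_boot.
Set Implicit Arguments. Unset Strict Implicit. Unset Printing Implicit Defensive.

(* Alphabet Sigma = [sigma] is modelled by 'I_sigma; words are seq 'I_sigma.
   A Parikh vector P in N^sigma is a function 'I_sigma -> nat. *)

Definition has_parikh (sigma : nat) (P : 'I_sigma -> nat) (w : seq 'I_sigma) : bool :=
  [forall a : 'I_sigma, count_mem a w == P a].

Definition swap2 (sigma : nat) (w : seq 'I_sigma) (i j : nat) : seq 'I_sigma :=
  [seq (if kc.1 == i then nth kc.2 w j
        else if kc.1 == j then nth kc.2 w i
        else kc.2) | kc <- zip (iota 0 (size w)) w].
  (* the defaults kc.2 are irrelevant since i, j < size w below *)

Definition swap_adj (sigma : nat) (w u : seq 'I_sigma) : Prop :=
  exists i j : nat, [/\ i < size w, j < size w, i != j,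
    onth w i != onth w j & u = swap2 w i j].

Fixpoint adj_path (sigma : nat) (x : seq 'I_sigma) (p : seq (seq 'I_sigma)) : Prop :=
  match p with
  | [::] => True
  | y :: p' => swap_adj x y /\ adj_path y p'
  end.

Definition hamiltonian_path_from (sigma : nat) (P : 'I_sigma -> nat)
    (w : seq 'I_sigma) (p : seq (seq 'I_sigma)) : Prop :=
  [/\ uniq (w :: p),
      all (has_parikh P) (w :: p),
      (forall u, has_parikh P u -> u \in w :: p)
    & adj_path w p].

From mathcomp Require Import all_boot.
Set Implicit Arguments. Unset Strict Implicit. Unset Printing Implicit Defensive.

(* Every configuration graph G(P) has a Hamiltonian path from any vertex w.  The proof is by induction on
   the word length n.  Partition the vertices of G(P) into blocks according
   to their first letter.  Prepending a letter a to the words of G(P - e_a)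
   embeds that graph into the block of a, so by induction the block of the
   first letter a of w has a Hamiltonian path starting at w.  If it ends at
   a :: z and b <> a is another letter with P b > 0, then b occurs in z and
   swapping the leading a with that occurrence of b is an edge into the block
   of b; from there the argument repeats.  Visiting the blocks of all the
   letters of positive multiplicity one after the other gives the path. *)

Section ConfigurationGraph.

Variable sigma : nat.
Implicit Types (P : 'I_sigma -> nat) (a b c : 'I_sigma) (u v w x y z : seq 'I_sigma).

Lemma size_swap2 w i j : size (swap2 w i j) = size w.
Proof. by rewrite /swap2 size_map size_zip size_iota minnn. Qed.

Lemma nth_swap2 w i j k (x0 : 'I_sigma) :
  i < size w -> j < size w -> k < size w ->
  nth x0 (swap2 w i j) k =
  if k == i then nth x0 w j else if k == j then nth x0 w i else nth x0 w k.
Proof.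
move=> Hi Hj Hk.
rewrite /swap2 (nth_map (0, x0)) ?size_zip ?size_iota ?minnn //.
rewrite nth_zip ?size_iota // /= nth_iota // add0n.
by rewrite (set_nth_default x0 (nth x0 w k) Hj) (set_nth_default x0 (nth x0 w k) Hi).
Qed.

Lemma swap_adj_cons c u v : swap_adj u v -> swap_adj (c :: u) (c :: v).
Proof.
move=> [i [j [Hi Hj Hij Hne ->]]].
exists i.+1, j.+1; split; rewrite /= ?ltnS ?eqSS //.
apply: (@eq_from_nth _ c); first by rewrite size_swap2 /= size_swap2.
move=> k; rewrite -[size (c :: _)]/((size (swap2 u i j)).+1) size_swap2 => Hk.
by rewrite nth_swap2 //; case: k Hk => [|k] Hk //=; rewrite nth_swap2.
Qed.

Lemma swap_adj_head a b z1 z2 :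
  a != b -> swap_adj (a :: z1 ++ b :: z2) (b :: z1 ++ a :: z2).
Proof.
move=> Hab.
have Hs : size (a :: z1 ++ b :: z2) = (size z1 + size z2).+2.
  by rewrite /= size_cat /= addnS.
have Hb : (size z1).+1 < (size z1 + size z2).+2 by rewrite !ltnS leq_addr.
exists 0, (size z1).+1; split; rewrite ?Hs //.
  by rewrite /= onth_cat ltnn subnn /=; apply: contra Hab => /eqP [->].
apply: (@eq_from_nth _ a); first by rewrite size_swap2 Hs /= size_cat /= addnS.
move=> k; rewrite -[size (b :: _)]/((size (z1 ++ a :: z2)).+1) size_cat /= addnS.
move=> Hk; rewrite nth_swap2 ?Hs //.
case: k Hk => [|k] Hk /=; first by rewrite nth_cat ltnn subnn.
rewrite eqSS !nth_cat.
case: (ltngtP k (size z1)) => Hk1 //=; last by rewrite Hk1 subnn.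
by rewrite -[k - size z1](@prednK _) ?subn_gt0.
Qed.

Lemma adj_path_map c x q : adj_path x q -> adj_path (c :: x) (map (cons c) q).
Proof.
elim: q x => //= y q IH x [Hxy Hq]; split; [exact: swap_adj_cons | exact: IH].
Qed.

Lemma adj_path_cat x s t :
  adj_path x s -> adj_path (last x s) t -> adj_path x (s ++ t).
Proof. by elim: s x => //= y s IH x [Hxy Hs] Ht; split => //; apply: IH. Qed.

Definition parikh_del P a : 'I_sigma -> nat := fun t => P t - (t == a).

Lemma has_parikh_cons P a u :
  has_parikh P (a :: u) <-> 0 < P a /\ has_parikh (parikh_del P a) u.
Proof.
rewrite /parikh_del; split => [/forallP H | [HPa /forallP H]].
  split; first by move: (H a) => /eqP <-; rewrite /= eqxx.
  apply/forallP => x; move: (H x) => /eqP <- /=; rewrite [a == x]eq_sym.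
  by case: (x == a); rewrite /= ?add1n ?subSS ?subn0 ?add0n.
apply/forallP => x; move: (H x) => /eqP /= E.
rewrite [a == x]eq_sym; case: eqP E => [->|_] E; last by rewrite add0n E subn0.
by rewrite add1n E subn1 prednK.
Qed.

Lemma parikh_perm_eq P u v : has_parikh P u -> has_parikh P v -> perm_eq u v.
Proof.
move=> /forallP hu /forallP hv; apply/allP => x _ /=.
by move: (hu x) (hv x) => /eqP -> /eqP ->.
Qed.

Lemma has_parikh_perm P u v : has_parikh P u -> perm_eq u v -> has_parikh P v.
Proof.
move=> /forallP hu /permP huv; apply/forallP => x.
by rewrite -huv; apply: hu.
Qed.

Definition starts_in (S : seq 'I_sigma) u : bool :=
  if u is c :: _ then c \in S else false.

Definition ham_path_on P (S : seq 'I_sigma) v (p : seq (seq 'I_sigma)) : Prop :=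
  [/\ uniq (v :: p), all (has_parikh P) (v :: p),
      (forall u, has_parikh P u -> starts_in S u -> u \in v :: p),
      all (starts_in S) (v :: p) & adj_path v p].

Lemma block_path P a v q :
  0 < P a -> hamiltonian_path_from (parikh_del P a) v q ->
  ham_path_on P [:: a] (a :: v) (map (cons a) q).
Proof.
move=> HPa [Hq1 Hq2 Hq3 Hq4].
rewrite /ham_path_on -[(a :: v) :: _]/(map (cons a) (v :: q)); split.
- by rewrite map_inj_uniq // => x y [].
- by apply/allP => x /mapP [y Hy ->]; apply/has_parikh_cons; split=> //; apply: (allP Hq2).
- case=> [|c u] // Hu; rewrite /= mem_seq1 => /eqP Ec; subst c.
  have [_ Hu'] := (has_parikh_cons P a u).1 Hu.
  by rewrite -[(a :: v) :: _]/(map (cons a) (v :: q)); apply: map_f; apply: Hq3.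
- by apply/allP => x /mapP [y _ ->]; rewrite /= mem_seq1.
- exact: adj_path_map.
Qed.

Lemma bridge P a b x :
  has_parikh P x -> starts_in [:: a] x -> b != a -> 0 < P b ->
  exists y, [/\ has_parikh P y, starts_in [:: b] y & swap_adj x y].
Proof.
case: x => [|c z] // Hx; rewrite /= mem_seq1 => /eqP Ec; subst c => Hba HPb.
have [_ /forallP Hz] := (has_parikh_cons P a z).1 Hx.
have Hbz : b \in z.
  rewrite -has_pred1 has_count; move: (Hz b) => /eqP ->.
  by rewrite /parikh_del (negbTE Hba) subn0.
move: Hx {Hz}; case/splitPr: Hbz => z1 z2 Hx {z}; exists (b :: z1 ++ a :: z2); split.
- apply: has_parikh_perm Hx _; apply/permP => t.
  by rewrite /= !count_cat /= addnCA [t a + _]addnCA addnCA.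
- by rewrite /= mem_seq1.
- by apply: swap_adj_head; rewrite eq_sym.
Qed.

Lemma ham_path_on_cat P S T v p y p' :
  {in S, forall c, c \notin T} ->
  ham_path_on P S v p -> ham_path_on P T y p' -> swap_adj (last v p) y ->
  ham_path_on P (S ++ T) v (p ++ y :: p').
Proof.
move=> HST [Hp1 Hp2 Hp3 Hp4 Hp5] [Hq1 Hq2 Hq3 Hq4 Hq5] Hlast.
rewrite /ham_path_on -cat_cons; split.
- rewrite cat_uniq Hp1 Hq1 andbT; apply/hasPn => x Hx; apply/negP => Hxp.
  move: (allP Hp4 x Hxp) (allP Hq4 x Hx).
  by case: x {Hx Hxp} => [|c x] //= /HST /negbTE ->.
- by rewrite all_cat Hp2 Hq2.
- move=> u Hu; rewrite mem_cat; case: u Hu => [|c u] Hu //=.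
  rewrite mem_cat => /orP [Hc | Hc]; first by rewrite Hp3.
  by rewrite Hq3 ?orbT.
- have widen R R' x : {subset R <= R'} -> starts_in R x -> starts_in R' x.
    by case: x => //= c x sub /sub.
  rewrite all_cat; apply/andP; split; apply/allP => x.
    by move=> /(allP Hp4); apply: widen => c; rewrite mem_cat => ->.
  by move=> /(allP Hq4); apply: widen => c; rewrite mem_cat => ->; rewrite orbT.
- by apply: adj_path_cat => //=; split.
Qed.

Lemma ham_path_on_full P S v p :
  (forall c, 0 < P c -> c \in S) -> ham_path_on P S v p ->
  hamiltonian_path_from P v p.
Proof.
move=> HS [Hp1 Hp2 Hp3 _ Hp5]; split => // -[|c u] Hu; last first.
  by apply: Hp3 => //; apply: HS; case: ((has_parikh_cons P c u).1 Hu).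
have Hv := allP Hp2 v (mem_head v p).
suff -> : v = [::] by rewrite mem_head.
by apply/nilP; rewrite /nilp (perm_size (parikh_perm_eq Hv Hu)).
Qed.

Section InductionStep.

Variable n : nat.
Hypothesis ham_size_n : forall Q w, size w = n -> has_parikh Q w ->
  exists p, hamiltonian_path_from Q w p.

Lemma blocks_path P (bs : seq 'I_sigma) a v :
  size v = n.+1 -> has_parikh P v -> starts_in [:: a] v ->
  a \notin bs -> uniq bs -> all (fun b => 0 < P b) bs ->
  exists p, ham_path_on P (a :: bs) v p.
Proof.
elim: bs a v => [|b bs IHbs] a [|c v] // [Hs] Hv;
  rewrite /= mem_seq1 => /eqP Ec; subst c.
all: have [HPa Hv'] := (has_parikh_cons P a v).1 Hv.
all: have [q Hq] := ham_size_n Hs Hv'.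
all: have Hblock := block_path HPa Hq.
  by move=> *; exists (map (cons a) q).
move=> Ha_notin /andP [Hb_bs Hbs] /andP [HPb Hpos].
have Ha_bs : a \notin bs by apply: contra Ha_notin; rewrite inE orbC => ->.
set x := last (a :: v) (map (cons a) q).
have Hx : x \in (a :: v) :: map (cons a) q by apply: mem_last.
have [_ Hall _ Hstart _] := Hblock.
have Hba : b != a by apply: contra Ha_notin => /eqP ->; rewrite mem_head.
have [y [Hy Hyb Hxy]] := bridge (allP Hall x Hx) (allP Hstart x Hx) Hba HPb.
have Hsize : size y = n.+1.
  by rewrite -(perm_size (parikh_perm_eq Hv Hy)) /= Hs.
have [p' Hp'] := IHbs b y Hsize Hy Hyb Hb_bs Hbs Hpos.
exists (map (cons a) q ++ y :: p').
apply: (ham_path_on_cat (S := [:: a])) => //.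
by move=> c; rewrite mem_seq1 => /eqP ->.
Qed.

End InductionStep.

Lemma ham_path_by_size n P w :
  size w = n -> has_parikh P w -> exists p, hamiltonian_path_from P w p.
Proof.
elim: n P w => [|n IH] P [|a u] // Hs Hw.
  exists [::]; split=> //=; first by rewrite Hw.
  by move=> u Hu; rewrite mem_seq1 -size_eq0 (perm_size (parikh_perm_eq Hu Hw)).
pose bs := [seq b <- enum 'I_sigma | (b != a) && (0 < P b)].
have Hbs_pos : all (fun b => 0 < P b) bs.
  by apply/allP => b; rewrite mem_filter => /andP [/andP [_ ->]].
have Ha_bs : a \notin bs by rewrite mem_filter eqxx.
have [p Hp] := blocks_path IH (bs := bs) Hs Hw (mem_head a [::])
  Ha_bs (filter_uniq _ (enum_uniq _)) Hbs_pos.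
exists p; apply: ham_path_on_full Hp => c Pc.
by rewrite inE mem_filter mem_enum andbT Pc andbT; case: eqP.
Qed.

End ConfigurationGraph.

Theorem theorem4 (sigma : nat) (P : 'I_sigma -> nat) (w : seq 'I_sigma) :
  2 <= sigma -> has_parikh P w ->
  exists p : seq (seq 'I_sigma), hamiltonian_path_from P w p.
Proof. by move=> _; apply: ham_path_by_size. Qed.
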